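(* Let $X\in\mathbb{R}^{n\times d}$ with $n\ge2$, $y\in\mathbb{R}^n$, and let $g:\mathbb{R}^d\to(-\infty,\infty]$ be a proper lower semicontinuous convex function with $g(k\beta)=kg(\beta)$ for all $k\ge0$, $\beta\in\mathbb{R}^d$, such that there exists $\beta\in\mathrm{relint}(\mathrm{dom}(g))$ and $\frac12\|y-X\beta\|_2^2+g(\beta)$ attains its infimum. Let $D(\theta)=-\frac12\|\theta\|_2^2+y^\top\theta-g^\star(X^\top\theta)$. Let $\tilde\beta\in\mathbb{R}^d$ with $X\tilde\beta\ne0$ and $\tilde\theta\in\mathrm{dom}(D)$, and let \[ \mathcal{R}^{\mathrm{DS}}(\tilde\beta,\tilde\theta)=\Big\{\theta\ \Big|\ \Big\|\theta-\tfrac12(\tilde\theta+y)\Big\|_2^2\le\tfrac14\|\tilde\theta-y\|_2^2\ \land\ 0\le g(\tilde\beta)-\theta^\top X\tilde\beta\Big\}. \] Define \[ \alpha=\max\Big(0,\frac{1}{\|X\tilde\beta\|_2^2}\Big(\tfrac12(\tilde\theta+y)^\top X\tilde\beta-g(\tilde\beta)\Big)\Big),\quad \theta_c=\tfrac12(\tilde\theta+y)-\alpha X\tilde\beta,\quad r^2=\tfrac14\|\tilde\theta-y\|_2^2-\alpha^2\|X\tilde\beta\|_2^2. \] Then the minimum-radius Euclidean ball containing $\mathcal{R}^{\mathrm{DS}}(\tilde\beta,\tilde\theta)$ is $\mathcal{R}^{\mathrm{DE}}(\tilde\beta,\tilde\theta)=\{\theta\mid\|\theta-\theta_c\|_2^2\le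 r^2\}$.
   Context: $g^\star(v)=\sup_\beta v^\top\beta-g(\beta)$ is the Fenchel conjugate; $\mathrm{dom}(h)=\{z:|h(z)|<\infty\}$; $\mathrm{relint}$ is relative interior. *)

From HB Require Import structures.
From mathcomp Require Import all_boot all_order all_algebra.
From mathcomp Require Import all_classical all_reals ereal.
Set Implicit Arguments. Unset Strict Implicit. Unset Printing Implicit Defensive.
Import Order.TTheory GRing.Theory Num.Theory.
Local Open Scope ring_scope.
Local Open Scope classical_set_scope.

Definition dotv {R : realType} {m : nat} (u v : 'cV[R]_m) : R :=
  \sum_(i < m) u i 0 * v i 0.

Definition nrm2 {R : realType} {m : nat} (u : 'cV[R]_m) : R := dotv u u.
Definition enorm {R : realType} {m : nat} (u : 'cV[R]_m) : R := Num.sqrt (nrm2 u).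

Definition eball {R : realType} {m : nat} (c : 'cV[R]_m) (rho : R) : set 'cV[R]_m :=
  [set th | enorm (th - c) <= rho].

(* B(c, rho) is THE minimum-radius Euclidean ball containing S:
   it contains S, every ball containing S has radius >= rho, and any
   containing ball of radius <= rho is this very ball (same center). *)
Definition min_enclosing_ball {R : realType} {m : nat}
  (S : set 'cV[R]_m) (c : 'cV[R]_m) (rho : R) : Prop :=
  0 <= rho /\ S `<=` eball c rho /\
  (forall c' rho', S `<=` eball c' rho' -> rho <= rho' /\ (rho' <= rho -> c' = c)).

Definition proper_fun {R : realType} {d : nat} (g : 'cV[R]_d -> \bar R) : Prop :=
  (forall b, g b != -oo%E) /\ (exists b, g b != +oo%E).

Definition convex_fun {R : realType} {d : nat} (g : 'cV[R]_d -> \bar R) : Prop :=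
  forall (a b : 'cV[R]_d) (t : R), 0 <= t <= 1 ->
    (g (t *: a + (1 - t) *: b)%R <= t%:E * g a + (1 - t)%:E * g b)%E.

Definition lsc_fun {R : realType} {d : nat} (g : 'cV[R]_d -> \bar R) : Prop :=
  forall (x : 'cV[R]_d) (a : R), (a%:E < g x)%E ->
    exists2 e : R, 0 < e & forall z, enorm (z - x) < e -> (a%:E < g z)%E.

Definition edom {R : realType} {d : nat} (g : 'cV[R]_d -> \bar R) : set 'cV[R]_d :=
  [set b | g b \is a fin_num].

Definition aff_hull {R : realType} {d : nat} (S : set 'cV[R]_d) : set 'cV[R]_d :=
  [set x | exists (k : nat) (l : 'I_k -> R) (s : 'I_k -> 'cV[R]_d),
     (forall i, S (s i)) /\ \sum_(i < k) l i = 1 /\ x = \sum_(i < k) l i *: s i].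

Definition relint {R : realType} {d : nat} (S : set 'cV[R]_d) : set 'cV[R]_d :=
  [set x | S x /\ exists2 e : R, 0 < e &
     forall z, aff_hull S z -> enorm (z - x) < e -> S z].

Definition fenchel {R : realType} {d : nat} (g : 'cV[R]_d -> \bar R) (v : 'cV[R]_d) : \bar R :=
  ereal_sup [set ((dotv v b)%:E - g b)%E | b in [set: 'cV[R]_d]].

Definition dualD {R : realType} {n d : nat} (X : 'M[R]_(n, d)) (y : 'cV[R]_n)
  (g : 'cV[R]_d -> \bar R) (th : 'cV[R]_n) : \bar R :=
  ((- (2^-1 * nrm2 th) + dotv y th)%:E - fenchel g (X^T *m th))%E.

Definition RDS {R : realType} {n d : nat} (X : 'M[R]_(n, d)) (y : 'cV[R]_n)
  (g : 'cV[R]_d -> \bar R) (bt : 'cV[R]_d) (tt : 'cV[R]_n) : set 'cV[R]_n :=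
  [set th | nrm2 (th - 2^-1 *: (tt + y)) <= 4^-1 * nrm2 (tt - y) /\
            (0 <= g bt - (dotv th (X *m bt))%:E)%E].

(* alpha = max(0, (1/2 (tt+y)^T X bt - g(bt)) / |X bt|^2), computed in \bar R
   (if g bt = +oo this gives max(0,-oo) = 0) *)
Definition alphaDE {R : realType} {n d : nat} (X : 'M[R]_(n, d)) (y : 'cV[R]_n)
  (g : 'cV[R]_d -> \bar R) (bt : 'cV[R]_d) (tt : 'cV[R]_n) : R :=
  fine (Order.max 0%E
    (((nrm2 (X *m bt))^-1)%:E * ((dotv (2^-1 *: (tt + y)) (X *m bt))%:E - g bt)))%E.

From HB Require Import structures.
From mathcomp Require Import all_boot all_order all_algebra.
From mathcomp Require Import all_classical all_reals ereal.
From mathcomp Require Import ring lra.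
Set Implicit Arguments. Unset Strict Implicit. Unset Printing Implicit Defensive.
Import Order.TTheory GRing.Theory Num.Theory.
Local Open Scope ring_scope.
Local Open Scope classical_set_scope.

(* For a positively homogeneous g the conjugate g* is the indicator of
   {w | w^T b <= g(b) for all b}; since g*(X^T tt) is finite, tt satisfies the
   half-space constraint.  So R^DS is the ball B(c, rho), c = (tt + y)/2, cut
   by the half-space {th | th^T v <= g(bt)}, v = X bt, and it is nonempty.
   The shifted centre c - alpha v lies on the cutting hyperplane when
   alpha > 0, and expanding |th - c + alpha v|^2 bounds the cut ball by
   B(c - alpha v, r).  As n >= 2 there is u orthogonal to v with |u|^2 = r^2;
   the antipodal points c - alpha v +- u lie in the cut ball, and by the
   parallelogram law every ball containing both has radius at least r, with
   equality only at the centre c - alpha v. *)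

Section DotProduct.
Context {R : realType} {m : nat}.
Implicit Types (u v w : 'cV[R]_m).

Lemma dotvC u v : dotv u v = dotv v u.
Proof. by apply: eq_bigr => i _; rewrite mulrC. Qed.

Lemma dotvDl u w v : dotv (u + w) v = dotv u v + dotv w v.
Proof. by rewrite /dotv -big_split; apply: eq_bigr => i _; rewrite mxE mulrDl. Qed.

Lemma dotvZl (a : R) u v : dotv (a *: u) v = a * dotv u v.
Proof. by rewrite /dotv mulr_sumr; apply: eq_bigr => i _; rewrite mxE mulrA. Qed.

Lemma dotvBl u w v : dotv (u - w) v = dotv u v - dotv w v.
Proof. by rewrite dotvDl -scaleN1r dotvZl mulN1r. Qed.

Lemma dotvDr u w v : dotv v (u + w) = dotv v u + dotv v w.
Proof. by rewrite dotvC dotvDl !(dotvC v). Qed.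

Lemma dotvZr (a : R) u v : dotv v (a *: u) = a * dotv v u.
Proof. by rewrite dotvC dotvZl dotvC. Qed.

Lemma dotv_delta (i : 'I_m) v : dotv (delta_mx i 0) v = v i 0.
Proof.
rewrite /dotv (bigD1 i) //= big1 ?addr0 => [|j /negbTE ji]; rewrite mxE ?ji ?mul0r //.
by rewrite !eqxx mul1r.
Qed.

Lemma nrm2_ge0 u : 0 <= nrm2 u.
Proof. by apply: sumr_ge0 => i _; rewrite -expr2 sqr_ge0. Qed.

Lemma nrm2_eq0 u : (nrm2 u == 0) = (u == 0).
Proof.
apply/idP/idP => [/eqP u0|/eqP->]; last first.
  by rewrite /nrm2 /dotv big1 // => i _; rewrite mxE mul0r.
apply/eqP/matrixP => i j; rewrite (ord1 j) mxE.
have sq_ge0 (k : 'I_m) : true -> 0 <= u k 0 * u k 0 by rewrite -expr2 sqr_ge0.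
by move: (psumr_eq0P sq_ge0 u0 (i := i) isT) => /eqP; rewrite mulf_eq0 orbb => /eqP.
Qed.

Lemma nrm2_gt0 u : (0 < nrm2 u) = (u != 0).
Proof. by rewrite lt_def nrm2_ge0 nrm2_eq0 andbT. Qed.

Lemma nrm2Z (a : R) u : nrm2 (a *: u) = a ^+ 2 * nrm2 u.
Proof. by rewrite /nrm2 dotvZl dotvZr mulrA. Qed.

Lemma nrm2D u w : nrm2 (u + w) = nrm2 u + 2 * dotv u w + nrm2 w.
Proof. rewrite /nrm2 dotvDl !dotvDr (dotvC w u); ring. Qed.

Lemma nrm2B u w : nrm2 (u - w) = nrm2 u - 2 * dotv u w + nrm2 w.
Proof. rewrite nrm2D -scaleN1r nrm2Z dotvZr; ring. Qed.

Lemma eball_sqrt (c : 'cV[R]_m) (r : R) : 0 <= r ->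
  eball c (Num.sqrt r) = [set x | nrm2 (x - c) <= r].
Proof. by move=> r0; apply/seteqP; split => x; rewrite /eball /= /enorm ler_sqrt. Qed.

Lemma eballE (c : 'cV[R]_m) (rho : R) : 0 <= rho ->
  eball c rho = [set x | nrm2 (x - c) <= rho ^+ 2].
Proof. by move=> rho0; rewrite -eball_sqrt ?sqr_ge0 // sqrtr_sqr ger0_norm. Qed.

Lemma exists_orthogonal v : (2 <= m)%N -> exists2 w, w != 0 & dotv w v = 0.
Proof.
(* v_1 e_0 - v_0 e_1 is orthogonal to v; if it vanishes then v_0 = 0 and e_0 is *)
move=> m2; pose i0 := Ordinal (ltnW m2); pose i1 := Ordinal m2.
pose w : 'cV[R]_m := v i1 0 *: delta_mx i0 0 - v i0 0 *: delta_mx i1 0.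
have wv : dotv w v = 0 by rewrite dotvBl !dotvZl !dotv_delta mulrC subrr.
have [w0|] := eqVneq w 0; last by exists w.
exists (delta_mx i0 0).
  by apply/eqP => /matrixP/(_ i0 0); rewrite !mxE !eqxx; apply/eqP; exact: oner_neq0.
have /matrixP/(_ i1 0) := w0; rewrite !mxE !eqxx /= mulr0 mulr1 sub0r => /eqP.
by rewrite oppr_eq0 dotv_delta => /eqP.
Qed.

Lemma exists_orthogonal_nrm2 v (r : R) : (2 <= m)%N -> 0 <= r ->
  exists u, nrm2 u = r /\ dotv u v = 0.
Proof.
move=> m2 r0; have [w w0 wv] := exists_orthogonal v m2.
have w_gt0 : 0 < nrm2 w by rewrite nrm2_gt0.
exists ((Num.sqrt r / Num.sqrt (nrm2 w)) *: w); split; last by rewrite dotvZl wv mulr0.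
by rewrite nrm2Z exprMn exprVn !sqr_sqrtr ?nrm2_ge0 // divfK // gt_eqF.
Qed.

Lemma min_enclosing_ball_antipodal (S : set 'cV[R]_m) (c u : 'cV[R]_m) (r : R) :
  S `<=` [set x | nrm2 (x - c) <= r] -> nrm2 u = r -> S (c + u) -> S (c - u) ->
  min_enclosing_ball S c (Num.sqrt r).
Proof.
move=> Sr ur Sp Sm; have r0 : 0 <= r by rewrite -ur nrm2_ge0.
split; first exact: sqrtr_ge0.
split; first by rewrite eball_sqrt.
move=> c' rho' Srho; have rho0 : 0 <= rho'.
  by apply: le_trans (sqrtr_ge0 (nrm2 _)) (Srho _ Sp).
have := Srho _ Sp; have := Srho _ Sm; rewrite eballE //= (addrAC c u) (addrAC c (- u)).
rewrite (nrm2D (c - c') u) (nrm2B (c - c') u) ur => hm hp.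
have sum_le : nrm2 (c - c') + r <= rho' ^+ 2 by lra.
have dist0 := nrm2_ge0 (c - c').
split=> [|rho_le]; first by rewrite -(ger0_norm rho0) -sqrtr_sqr ler_sqrt ?sqr_ge0 //; lra.
have : rho' ^+ 2 <= r by rewrite -ler_sqrt ?sqrtr_sqr ?ger0_norm // sqr_ge0.
move=> rho2_le; apply/eqP; rewrite eq_sym -subr_eq0 -nrm2_eq0 eq_le dist0 andbT; lra.
Qed.

End DotProduct.

Lemma dotv_trmx (R : realType) (n d : nat) (A : 'M[R]_(n, d)) u w :
  dotv (A^T *m u) w = dotv u (A *m w).
Proof.
have dotv_mx m (a b : 'cV[R]_m) : dotv a b = (a^T *m b) 0 0.
  by rewrite mxE; apply: eq_bigr => i _; rewrite mxE.
by rewrite !dotv_mx trmx_mul trmxK mulmxA.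
Qed.

Lemma dotv_le_homog_fenchel (R : realType) (d : nat) (g : 'cV[R]_d -> \bar R) w b :
  (forall (k : R) b, 0 <= k -> g (k *: b) = (k%:E * g b)%E) ->
  fenchel g w != +oo%E -> ((dotv w b)%:E <= g b)%E.
Proof.
move=> ghom; have ub b' : ((dotv w b')%:E - g b' <= fenchel g w)%E.
  by apply: ereal_sup_ubound; exists b'.
case gb: (g b) => [gb'| |];
  [|by rewrite leey|by have := ub b; rewrite gb /= leye_eq => /eqP->].
case Fw: (fenchel g w) => [f| |] // _; last by have := ub b; rewrite gb Fw.
rewrite lee_fin leNgt; apply/negP => gap; rewrite -subr_gt0 in gap.
(* g(k b) = k g(b), so w^T (k b) - g(k b) = k (w^T b - g b) exceeds f for large k *)
pose k := (`|f| + 1) / (dotv w b - gb').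
have k_gt0 : 0 < k by rewrite divr_gt0 // ltr_pwDr // normr_ge0.
have := ub (k *: b); rewrite (ghom _ _ (ltW k_gt0)) gb Fw dotvZr.
rewrite -EFinM -EFinB lee_fin -mulrBr.
by rewrite divfK ?gt_eqF //; have := ler_norm f; lra.
Qed.

Lemma subeEFin_ge0 (R : realType) (x : R) (z : \bar R) :
  (0 <= z - x%:E)%E = (x%:E <= z)%E.
Proof. by rewrite sube_ge0. Qed.

Section BallCut.
Context {R : realType} {m : nat}.
Variables (c v : 'cV[R]_m) (r2 : R) (gam : \bar R).

Definition ball_cut : set 'cV[R]_m :=
  [set th | nrm2 (th - c) <= r2 /\ (0 <= gam - (dotv th v)%:E)%E].

Definition cut_coef : R :=
  fine (Order.max 0 (((nrm2 v)^-1)%:E * ((dotv c v)%:E - gam)))%E.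

Definition cut_center : 'cV[R]_m := c - cut_coef *: v.

Definition cut_radius2 : R := r2 - cut_coef ^+ 2 * nrm2 v.

Lemma dotv_cut_center : dotv cut_center v = dotv c v - cut_coef * nrm2 v.
Proof. by rewrite dotvBl dotvZl. Qed.

Hypotheses (v_neq0 : v != 0) (gam_neq_ninfty : gam != -oo%E).

(* complementary slackness: the shifted centre is feasible, and the shift is
   positive only when the centre lies on the cutting hyperplane *)
Lemma cut_coef_spec :
  [/\ 0 <= cut_coef, ((dotv cut_center v)%:E <= gam)%E
    & cut_coef = 0 \/ (dotv cut_center v)%:E = gam].
Proof.
have v_gt0 : 0 < nrm2 v by rewrite nrm2_gt0.
rewrite dotv_cut_center /cut_coef.
case: gam gam_neq_ninfty => [g0| |] // _; last first.
  rewrite gt0_muleNy ?lte_fin ?invr_gt0 // max_l ?leNye //=.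
  by rewrite mul0r subr0 leey; split=> //; left.
rewrite -EFinB -EFinM -EFin_max /= lee_fin.
set q := (nrm2 v)^-1 * (dotv c v - g0).
have vq : nrm2 v * q = dotv c v - g0 by rewrite mulVKf ?gt_eqF.
have [q_le0|q_gt0] := leP q 0.
  by split=> //; [nra|left].
by split; [exact: ltW|lra|right; congr EFin; lra].
Qed.

Lemma ball_cut_sub : ball_cut `<=` [set th | nrm2 (th - cut_center) <= cut_radius2].
Proof.
move=> th [th_ball]; rewrite /= subeEFin_ge0 => th_le.
have [coef_ge0 _ slack] := cut_coef_spec.
have coef_slack : cut_coef * (dotv th v - dotv cut_center v) <= 0.
  case: slack => [->|on_plane]; first by rewrite mul0r.
  by rewrite mulr_ge0_le0 // subr_le0 -lee_fin on_plane.
have -> : th - cut_center = (th - c) + cut_coef *: v by rewrite opprB addrA addrAC.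
move: coef_slack; rewrite nrm2D dotvZr dotvBl nrm2Z dotv_cut_center /cut_radius2; nra.
Qed.

Lemma cut_radius2_ge0 th : ball_cut th -> 0 <= cut_radius2.
Proof. by move=> /ball_cut_sub; apply: le_trans; exact: nrm2_ge0. Qed.

Lemma ball_cut_center_orth u :
  nrm2 u = cut_radius2 -> dotv u v = 0 -> ball_cut (cut_center + u).
Proof.
move=> u_r2 uv; have [_ center_le _] := cut_coef_spec; split.
  have -> : cut_center + u - c = u - cut_coef *: v.
    by rewrite /cut_center addrAC (addrAC c) subrr add0r addrC.
  by rewrite nrm2B dotvZr uv u_r2 nrm2Z /cut_radius2; lra.
by rewrite subeEFin_ge0 dotvDl uv addr0.
Qed.

Lemma min_enclosing_ball_cut th : (2 <= m)%N -> ball_cut th ->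
  min_enclosing_ball ball_cut cut_center (Num.sqrt cut_radius2).
Proof.
move=> m2 th_in; have r2_ge0 := cut_radius2_ge0 th_in.
have [u [u_r2 uv]] := exists_orthogonal_nrm2 v m2 r2_ge0.
apply: (min_enclosing_ball_antipodal ball_cut_sub u_r2); first exact: ball_cut_center_orth.
apply: ball_cut_center_orth; rewrite -scaleN1r ?nrm2Z ?dotvZl ?uv ?mulr0 //.
by rewrite sqrrN expr1n mul1r.
Qed.

End BallCut.

Lemma RDSE (R : realType) (n d : nat) (X : 'M[R]_(n, d)) y
    (g : 'cV[R]_d -> \bar R) bt tt :
  RDS X y g bt tt = ball_cut (2^-1 *: (tt + y)) (X *m bt) (4^-1 * nrm2 (tt - y)) (g bt).
Proof. by []. Qed.

Lemma dual_point_in_RDS (R : realType) (n d : nat) (X : 'M[R]_(n, d)) y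
    (g : 'cV[R]_d -> \bar R) bt tt :
  (forall (k : R) b, 0 <= k -> g (k *: b) = (k%:E * g b)%E) ->
  dualD X y g tt \is a fin_num -> RDS X y g bt tt tt.
Proof.
move=> ghom; rewrite /dualD fin_numB => /andP[_ /fin_numP[_ conj_fin]].
split; last by rewrite subeEFin_ge0 -dotv_trmx dotv_le_homog_fenchel.
have -> : tt - 2^-1 *: (tt + y) = 2^-1 *: (tt - y).
  by apply/matrixP => i j; rewrite !mxE; lra.
by rewrite nrm2Z; have -> : (2^-1 : R) ^+ 2 = 4^-1 by lra.
Qed.

Theorem theorem11 (R : realType) (n d : nat) (X : 'M[R]_(n, d)) (y : 'cV[R]_n)
  (g : 'cV[R]_d -> \bar R) (bt : 'cV[R]_d) (tt : 'cV[R]_n) :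
  (2 <= n)%N ->
  proper_fun g -> lsc_fun g -> convex_fun g ->
  (forall (k : R) (b : 'cV[R]_d), 0 <= k -> g (k *: b) = (k%:E * g b)%E) ->
  (exists b, relint (edom g) b) ->
  (exists b0, forall b,
     ((2^-1 * nrm2 (y - X *m b0))%:E + g b0 <= (2^-1 * nrm2 (y - X *m b))%:E + g b)%E) ->
  X *m bt != 0 ->
  dualD X y g tt \is a fin_num ->
  let alpha := alphaDE X y g bt tt in
  let thc := 2^-1 *: (tt + y) - alpha *: (X *m bt) in
  let r2 := 4^-1 * nrm2 (tt - y) - alpha ^+ 2 * nrm2 (X *m bt) in
  exists rho : R, min_enclosing_ball (RDS X y g bt tt) thc rho /\
    eball thc rho = [set th | nrm2 (th - thc) <= r2].
Proof.
move=> n2 [g_ninfty _] _ _ ghom _ _ Xbt0 Dfin alpha thc r2.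
have := dual_point_in_RDS bt ghom Dfin; rewrite RDSE => tt_in.
have r2_ge0 : 0 <= r2 := cut_radius2_ge0 Xbt0 (g_ninfty bt) tt_in.
exists (Num.sqrt r2); split; last exact: eball_sqrt.
exact: (min_enclosing_ball_cut Xbt0 (g_ninfty bt) n2 tt_in).
Qed.
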